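(* Let $\Lambda$ be a finitely aligned left cancellative small category. Then the set \[F_\Lambda=\Big\{\bigcup_{i=1}^n\alpha_i\beta_i^*\in S_\Lambda^{\mathrm{Iso}}:\ n\ge1,\ \alpha_i,\beta_i\in\Lambda,\ \{\alpha_i\}_{i=1}^n\text{ and }\{\beta_i\}_{i=1}^n\text{ are exhaustive}\Big\}\cup\{0\}\] is an inverse subsemigroup of $S_\Lambda^{\mathrm{Iso}}$.
   Context: $\Lambda$ is a small category (objects $\Lambda^0$, range $r$, source $s$) which is left cancellative and finitely aligned (each $\alpha\Lambda\cap\beta\Lambda$ is a finite union of sets $f\Lambda$, where $\alpha\Lambda=\{\alpha\beta:s(\alpha)=r(\beta)\}$). Each $\alpha\in\Lambda$ is the partial bijection $s(\alpha)\Lambda\to\alpha\Lambda$, $\beta\mapsto\alpha\beta$, in the symmetric inverse monoid $\mathcal{I}(\Lambda)$ (composition on largest domain, zero = empty map), with inverse $\alpha^*$; $S_\Lambda$ is the inverse subsemigroup generated by these, and $\bigcup$ denotes union of partial maps. $S_\Lambda^{\mathrm{Iso}}=\{s\in S_\Lambda:ses^*e\neq0\text{ for every idempotent }0\neq e\leqslant s^*s\}$ (with $e\leqslant f$ iff $ef=e$); it is an inverse subsemigroup. For $x\in\Lambda^0$, a set $B\subseteq x\Lambda$ is exhaustive (at $x$) if for every $\alpha\in x\Lambda$ there is $\beta\in B$ with $\alpha\Lambda\cap\beta\Lambda\neq\emptyset$; ''exhaustive'' means exhaustive at some $x\in\Lambda^0$. *)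

From Stdlib Require Import List.
Import ListNotations.
Set Implicit Arguments.

(** A small category: objects [Obj], morphisms [Mor], range [r], source [s],
    identities [idm], composition [comp a b] = "a b" (a after b), meaningful
    when [s a = r b]. *)
Record SmallCat := {
  Obj : Type;
  Mor : Type;
  rg : Mor -> Obj;
  sc : Mor -> Obj;
  idm : Obj -> Mor;
  comp : Mor -> Mor -> Mor;
  rg_idm : forall x, rg (idm x) = x;
  sc_idm : forall x, sc (idm x) = x;
  rg_comp : forall a b, sc a = rg b -> rg (comp a b) = rg a;
  sc_comp : forall a b, sc a = rg b -> sc (comp a b) = sc b;
  comp_idl : forall a, comp (idm (rg a)) a = a;
  comp_idr : forall a, comp a (idm (sc a)) = a;
  comp_assoc : forall a b c, sc a = rg b -> sc b = rg c ->
      comp a (comp b c) = comp (comp a b) c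
}.

Section Defs.
Variable C : SmallCat.

Definition in_right_ideal (a g : Mor C) : Prop :=
  exists b, sc C a = rg C b /\ g = comp C a b.

Definition left_cancellative : Prop :=
  forall a b c, sc C a = rg C b -> sc C a = rg C c ->
    comp C a b = comp C a c -> b = c.

Definition finitely_aligned : Prop :=
  forall a b, exists fs : list (Mor C), forall g,
    (in_right_ideal a g /\ in_right_ideal b g) <->
    (exists f, In f fs /\ in_right_ideal f g).

(** Partial maps on Mor C, as graphs (relations). *)
Definition pmap := Mor C -> Mor C -> Prop.
Definition pzero : pmap := fun _ _ => False.
(** product [pcomp f g] = f o g : first apply g then f *)
Definition pcomp (f g : pmap) : pmap := fun x z => exists y, g x y /\ f y z.
Definition pinv (f : pmap) : pmap := fun x y => f y x.
Definition punion (fs : list pmap) : pmap := fun x y => exists f, In f fs /\ f x y.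

(** the partial bijection  s(alpha)Lambda -> alpha Lambda,  b |-> alpha b *)
Definition gen (a : Mor C) : pmap := fun b y => rg C b = sc C a /\ y = comp C a b.

Inductive in_S : pmap -> Prop :=
  | S_gen : forall a, in_S (gen a)
  | S_zero : in_S pzero
  | S_mul : forall f g, in_S f -> in_S g -> in_S (pcomp f g)
  | S_inv : forall f, in_S f -> in_S (pinv f).

Definition idempotent (e : pmap) : Prop := pcomp e e = e.
Definition ple (e f : pmap) : Prop := pcomp e f = e.

Definition S_Iso (s : pmap) : Prop :=
  in_S s /\
  forall e, in_S e -> idempotent e -> e <> pzero -> ple e (pcomp (pinv s) s) ->
    pcomp (pcomp (pcomp s e) (pinv s)) e <> pzero.

Definition exhaustive (B : list (Mor C)) : Prop :=
  exists x, (forall b, In b B -> rg C b = x) /\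
    forall a, rg C a = x -> exists b, In b B /\
      exists g, in_right_ideal a g /\ in_right_ideal b g.

Definition F_Lambda (f : pmap) : Prop :=
  f = pzero \/
  exists l : list (Mor C * Mor C), l <> [] /\
    f = punion (map (fun p => pcomp (gen (fst p)) (pinv (gen (snd p)))) l) /\
    S_Iso f /\ exhaustive (map fst l) /\ exhaustive (map snd l).

End Defs.

From Stdlib Require Import List.
From Stdlib Require Import Classical FunctionalExtensionality PropExtensionality.
Import ListNotations.

(* Elements of S_Λ are right-equivariant partial bijections, and for those the
   condition defining S_Λ^Iso just says that [s] maps some element of [eΛ] into
   [eΛ] whenever [e] lies in its domain; this is visibly preserved by products
   and inverses.  Inverting a union of [α β^*] swaps the pairs.  A product
   [α β^* γ δ^*] is the union of the [α p (δ q)^*] over a finite alignment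
   [β p = γ q] of [βΛ ∩ γΛ], and exhaustiveness passes through these
   alignments.  For a nonzero product all entries lie in one [xΛ]; the
   alignment argument needs [s(α) = s(β)], which holds unless some [c ∈ xΛ]
   has [s(c) ≠ x], and then zero terms [x c^*], [c x^*] can be added instead. *)

Lemma list_choice (A B : Type) (P : A -> B -> Prop) (l : list A) :
  (forall a, In a l -> exists b, P a b) ->
  exists lb : list B, (forall b, In b lb -> exists a, In a l /\ P a b) /\
    (forall a, In a l -> exists b, In b lb /\ P a b).
Proof.
  induction l as [| a l IH]; intros H.
  - exists []. split; intros _ [].
  - destruct IH as (lb & H1 & H2); [intros a' Ha'; apply H; right; exact Ha' |].
    destruct (H a) as [b Hb]; [left; reflexivity |].
    exists (b :: lb). split.
    + intros b' [<- | Hb']; [exists a; simpl; auto |].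
      destruct (H1 _ Hb') as (a' & ? & ?). exists a'. simpl. auto.
    + intros a' [<- | Ha']; [exists b; simpl; auto |].
      destruct (H2 _ Ha') as (b' & ? & ?). exists b'. simpl. auto.
Qed.

Section FLambda.

Variable C : SmallCat.
Hypothesis LC : left_cancellative C.
Hypothesis FA : finitely_aligned C.

Local Notation "a · b" := (comp C a b) (at level 40, left associativity).

Lemma pmap_ext (f g : pmap C) : (forall x y, f x y <-> g x y) -> f = g.
Proof.
  intros H. apply functional_extensionality; intros x.
  apply functional_extensionality; intros y.
  apply propositional_extensionality, H.
Qed.

Lemma pmap_nonzero {f : pmap C} : f <> pzero C -> exists x y, f x y.
Proof.
  intros Hf. apply NNPP; intros Hno. apply Hf, pmap_ext.
  intros x y; split; [intros Hxy; apply Hno; eauto | intros []].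
Qed.

Lemma in_right_ideal_refl (a : Mor C) : in_right_ideal C a a.
Proof. exists (idm C (sc C a)). rewrite rg_idm, comp_idr. auto. Qed.

Lemma in_right_ideal_idm (a : Mor C) : in_right_ideal C (idm C (rg C a)) a.
Proof. exists a. rewrite sc_idm, comp_idl. auto. Qed.

Lemma in_right_ideal_rg (a g : Mor C) : in_right_ideal C a g -> rg C g = rg C a.
Proof. intros (b & Hb & ->). apply rg_comp, Hb. Qed.

Lemma in_right_ideal_comp (a g m : Mor C) :
  in_right_ideal C a g -> sc C g = rg C m -> in_right_ideal C a (g · m).
Proof.
  intros (b & Hb & ->) Hm. rewrite sc_comp in Hm by exact Hb.
  exists (b · m). split.
  - rewrite rg_comp; assumption.
  - symmetry. apply comp_assoc; assumption.
Qed.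

Record equivariant_pbij (s : pmap C) : Prop := {
  pbij_fun : forall u v w, s u v -> s u w -> v = w;
  pbij_inj : forall u v w, s u w -> s v w -> u = v;
  pbij_sc : forall u v, s u v -> sc C u = sc C v;
  pbij_comp : forall u v m, s u v -> sc C u = rg C m -> s (u · m) (v · m)
}.
Arguments pbij_fun {s}. Arguments pbij_inj {s}.
Arguments pbij_sc {s}. Arguments pbij_comp {s}.

Lemma in_S_equivariant_pbij {s : pmap C} : in_S s -> equivariant_pbij s.
Proof.
  induction 1 as [a | | f g _ [F1 F2 F3 F4] _ [G1 G2 G3 G4] | f _ [F1 F2 F3 F4]].
  - split.
    + intros u v w [_ ->] [_ ->]. reflexivity.
    + intros u v w [Hu ->] [Hv E]. apply (LC a); congruence.
    + intros u v [Hu ->]. symmetry. apply sc_comp. congruence.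
    + intros u v m [Hu ->] Hm. split.
      * rewrite rg_comp; assumption.
      * symmetry. apply comp_assoc; congruence.
  - split; contradiction.
  - split.
    + intros u v w (y1 & Hg1 & Hf1) (y2 & Hg2 & Hf2).
      assert (y1 = y2) as <- by (eapply G1; eauto). eapply F1; eauto.
    + intros u v w (y1 & Hg1 & Hf1) (y2 & Hg2 & Hf2).
      assert (y1 = y2) as <- by (eapply F2; eauto). eapply G2; eauto.
    + intros u v (y & Hg & Hf). transitivity (sc C y); eauto.
    + intros u v m (y & Hg & Hf) Hm. exists (y · m).
      split; [apply G4 | apply F4]; auto.
      rewrite <- Hm. symmetry. eauto.
  - split; unfold pinv.
    + intros u v w H1 H2. eapply F2; eauto.
    + intros u v w H1 H2. eapply F1; eauto.
    + intros u v H. symmetry. eauto.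
    + intros u v m H Hm. apply F4; auto. rewrite <- Hm. eauto.
Qed.

Definition meets_own_cones (s : pmap C) : Prop :=
  forall e v, s e v ->
    exists g g', in_right_ideal C e g /\ in_right_ideal C e g' /\ s g g'.

Definition cone_id (e : Mor C) : pmap C := pcomp (gen C e) (pinv (gen C e)).

Lemma cone_id_iff (e x y : Mor C) :
  cone_id e x y <-> x = y /\ in_right_ideal C e x.
Proof.
  unfold cone_id, pcomp, pinv, gen. split.
  - intros (m & [Hm ->] & [_ ->]). split; [reflexivity | exists m; auto].
  - intros [<- (b & Hb & ->)]. exists b. auto.
Qed.

Lemma cone_id_in_S (e : Mor C) : in_S (cone_id e).
Proof. apply S_mul; [apply S_gen | apply S_inv, S_gen]. Qed.

Lemma cone_id_idempotent (e : Mor C) : idempotent (cone_id e).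
Proof.
  apply pmap_ext. intros x y. unfold pcomp at 1. rewrite cone_id_iff. split.
  - intros (m & Hxm & Hmy). apply cone_id_iff in Hxm, Hmy.
    destruct Hxm as [<- He], Hmy as [<- _]. auto.
  - intros [<- He]. exists x. rewrite !cone_id_iff. auto.
Qed.

Lemma cone_id_nonzero (e : Mor C) : cone_id e <> pzero C.
Proof.
  intros H. assert (Hee : cone_id e e e) by (apply cone_id_iff; auto using in_right_ideal_refl).
  rewrite H in Hee. exact Hee.
Qed.

Lemma cone_id_le {s : pmap C} {e v : Mor C} :
  equivariant_pbij s -> s e v -> ple (cone_id e) (pcomp (pinv s) s).
Proof.
  intros Hs Hev. apply pmap_ext. intros x y. unfold pcomp at 1. split.
  - intros (m & (k & Hxk & Hmk) & Hmy).
    assert (x = m) as <- by (eapply pbij_inj; eauto). exact Hmy.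
  - intros Hxy. exists x. split; [| exact Hxy].
    apply cone_id_iff in Hxy. destruct Hxy as [<- (b & Hb & ->)].
    exists (v · b). split; apply (pbij_comp Hs); auto.
Qed.

Lemma S_Iso_meets_own_cones (s : pmap C) : S_Iso s -> meets_own_cones s.
Proof.
  intros [HS Hiso] e v Hev.
  pose proof (in_S_equivariant_pbij HS) as Hs.
  specialize (Hiso _ (cone_id_in_S e) (cone_id_idempotent e) (cone_id_nonzero e)
                (cone_id_le Hs Hev)).
  destruct (pmap_nonzero Hiso) as (x & y & m1 & Hx & m2 & Hm2 & m3 & Hm3 & Hy).
  apply cone_id_iff in Hx, Hm3.
  destruct Hx as [<- Hex], Hm3 as [<- Hem].
  exists m2, x. auto.
Qed.

Lemma idempotent_pbij_refl {e : pmap C} {x y : Mor C} :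
  equivariant_pbij e -> idempotent e -> e x y -> e y y.
Proof.
  intros He Hid Hxy. pose proof Hxy as Hxy'.
  rewrite <- Hid in Hxy. destruct Hxy as (m & Hxm & Hmy).
  assert (m = y) as -> by (eapply pbij_fun; eauto). exact Hmy.
Qed.

Lemma meets_own_cones_S_Iso (s : pmap C) :
  in_S s -> meets_own_cones s -> S_Iso s.
Proof.
  intros HS Hcones. split; [exact HS |].
  intros e He Hid Hnz Hle H0.
  pose proof (in_S_equivariant_pbij He) as Pe.
  destruct (pmap_nonzero Hnz) as (x & y & Hxy).
  pose proof (idempotent_pbij_refl Pe Hid Hxy) as Hyy.
  rewrite <- Hle in Hyy. destruct Hyy as (m & (k & Hyk & _) & _).
  destruct (Hcones _ _ Hyk) as (g & g' & (b & Hb & ->) & (b' & Hb' & ->) & Hgg).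
  assert (Hfix : forall c, sc C y = rg C c -> e (y · c) (y · c)).
  { intros c Hc. apply (pbij_comp Pe); [| exact Hc].
    apply (idempotent_pbij_refl Pe Hid Hxy). }
  assert (Hloop : pcomp (pcomp (pcomp s e) (pinv s)) e (y · b') (y · b')).
  { exists (y · b'). split; [auto |].
    exists (y · b). split; [exact Hgg |].
    exists (y · b). split; [auto | exact Hgg]. }
  rewrite H0 in Hloop. exact Hloop.
Qed.

Lemma meets_own_cones_pcomp (s t : pmap C) :
  equivariant_pbij s -> equivariant_pbij t ->
  meets_own_cones s -> meets_own_cones t -> meets_own_cones (pcomp s t).
Proof.
  intros Ps Pt Hs Ht e v (m & Hem & Hmv).
  destruct (Ht _ _ Hem) as (g & g' & (b & Hb & ->) & (b' & Hb' & ->) & Hg).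
  assert (Hscm : sc C m = rg C b) by (rewrite <- (pbij_sc Pt _ _ Hem); exact Hb).
  assert (Heb : e · b' = m · b) by exact (pbij_fun Pt _ _ _ Hg (pbij_comp Pt _ _ _ Hem Hb)).
  assert (Hs_eb' : s (e · b') (v · b)) by (rewrite Heb; exact (pbij_comp Ps _ _ _ Hmv Hscm)).
  destruct (Hs _ _ Hs_eb') as (h & h' & (c & Hc & ->) & (c' & Hc' & ->) & Hh).
  exists (e · b · c), (e · b' · c'). split; [| split].
  - apply in_right_ideal_comp; [exists b; auto |].
    rewrite (pbij_sc Pt _ _ Hg). exact Hc.
  - apply in_right_ideal_comp; [exists b'; auto | exact Hc'].
  - exists (e · b' · c). split; [| exact Hh].
    apply (pbij_comp Pt _ _ _ Hg). rewrite (pbij_sc Pt _ _ Hg). exact Hc.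
Qed.

Lemma meets_own_cones_pinv (s : pmap C) :
  equivariant_pbij s -> meets_own_cones s -> meets_own_cones (pinv s).
Proof.
  intros Ps Hs e v Hve. unfold pinv in Hve.
  destruct (Hs _ _ Hve) as (g & g' & (b & Hb & ->) & (b' & Hb' & ->) & Hg).
  assert (Hsc : sc C v = sc C e) by exact (pbij_sc Ps _ _ Hve).
  assert (Hvb' : v · b' = e · b)
    by exact (pbij_fun Ps _ _ _ Hg (pbij_comp Ps _ _ _ Hve Hb)).
  exists (e · b'), (e · b). split; [exists b'; split; congruence |].
  split; [exists b; split; congruence |].
  unfold pinv. rewrite <- Hvb'. apply (pbij_comp Ps _ _ _ Hve Hb').
Qed.

Lemma S_Iso_pcomp (s t : pmap C) : S_Iso s -> S_Iso t -> S_Iso (pcomp s t).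
Proof.
  intros Hs Ht. apply meets_own_cones_S_Iso; [apply S_mul; [apply Hs | apply Ht] |].
  apply meets_own_cones_pcomp.
  - apply in_S_equivariant_pbij, Hs.
  - apply in_S_equivariant_pbij, Ht.
  - apply S_Iso_meets_own_cones, Hs.
  - apply S_Iso_meets_own_cones, Ht.
Qed.

Lemma S_Iso_pinv (s : pmap C) : S_Iso s -> S_Iso (pinv s).
Proof.
  intros Hs. apply meets_own_cones_S_Iso; [apply S_inv, Hs |].
  apply meets_own_cones_pinv;
    [apply in_S_equivariant_pbij, Hs | apply S_Iso_meets_own_cones, Hs].
Qed.

(** [pair_map (α, β)] is [α β^*]; it is the zero map unless [s(α) = s(β)]. *)
Definition pair_map (p : Mor C * Mor C) : pmap C :=
  pcomp (gen C (fst p)) (pinv (gen C (snd p))).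

Definition sum_map (l : list (Mor C * Mor C)) : pmap C := punion (map pair_map l).

Definition swap (p : Mor C * Mor C) : Mor C * Mor C := (snd p, fst p).

Definition balanced (l : list (Mor C * Mor C)) : Prop :=
  forall a b, In (a, b) l -> sc C a = sc C b.

Definition exhaustive_at (x : Obj C) (B : list (Mor C)) : Prop :=
  (forall b, In b B -> rg C b = x) /\
  forall a, rg C a = x -> exists b, In b B /\
    exists g, in_right_ideal C a g /\ in_right_ideal C b g.

Lemma F_Lambda_iff (f : pmap C) :
  F_Lambda f <-> f = pzero C \/
    exists l, l <> [] /\ f = sum_map l /\ S_Iso f /\
      (exists x, exhaustive_at x (map fst l)) /\ (exists y, exhaustive_at y (map snd l)).
Proof. reflexivity. Qed.

Lemma pair_map_iff (a b x y : Mor C) :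
  pair_map (a, b) x y <->
  exists t, rg C t = sc C b /\ rg C t = sc C a /\ x = b · t /\ y = a · t.
Proof.
  unfold pair_map, pcomp, pinv, gen; simpl. split.
  - intros (t & [Hb Hx] & [Ha Hy]). eauto.
  - intros (t & Hb & Ha & Hx & Hy). eauto.
Qed.

Lemma sum_map_iff (l : list (Mor C * Mor C)) (x y : Mor C) :
  sum_map l x y <-> exists p, In p l /\ pair_map p x y.
Proof.
  unfold sum_map, punion. split.
  - intros (f & Hf & Hxy). apply in_map_iff in Hf.
    destruct Hf as (p & <- & Hp). eauto.
  - intros (p & Hp & Hxy). exists (pair_map p). split; [apply in_map |]; auto.
Qed.

Lemma pair_map_unbalanced (a b x y : Mor C) :
  sc C a <> sc C b -> ~ pair_map (a, b) x y.
Proof.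
  intros Hab Hxy. apply pair_map_iff in Hxy.
  destruct Hxy as (t & Hb & Ha & _). congruence.
Qed.

Lemma in_map_swap (l : list (Mor C * Mor C)) (a b : Mor C) :
  In (a, b) (map swap l) <-> In (b, a) l.
Proof.
  split.
  - intros H. apply in_map_iff in H. destruct H as ([b' a'] & [= <- <-] & H). exact H.
  - intros H. exact (in_map swap _ _ H).
Qed.

Lemma map_fst_swap (l : list (Mor C * Mor C)) : map fst (map swap l) = map snd l.
Proof. rewrite map_map. reflexivity. Qed.

Lemma map_snd_swap (l : list (Mor C * Mor C)) : map snd (map swap l) = map fst l.
Proof. rewrite map_map. reflexivity. Qed.

Lemma balanced_swap (l : list (Mor C * Mor C)) : balanced l -> balanced (map swap l).
Proof. intros Hl a b Hab. symmetry. apply Hl, in_map_swap, Hab. Qed.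

Lemma sum_map_swap (l : list (Mor C * Mor C)) : pinv (sum_map l) = sum_map (map swap l).
Proof.
  apply pmap_ext. intros x y. unfold pinv. rewrite !sum_map_iff. split.
  - intros ([a b] & Hab & Hyx). exists (b, a). split; [apply in_map_swap, Hab |].
    apply pair_map_iff in Hyx. destruct Hyx as (t & Hb & Ha & -> & ->).
    apply pair_map_iff. eauto.
  - intros ([b a] & Hba & Hxy). exists (a, b). split; [apply in_map_swap, Hba |].
    apply pair_map_iff in Hxy. destruct Hxy as (t & Ha & Hb & -> & ->).
    apply pair_map_iff. eauto.
Qed.

Lemma sum_map_rg (l : list (Mor C * Mor C)) (x y : Obj C) (u v : Mor C) :
  (forall b, In b (map fst l) -> rg C b = x) ->
  (forall b, In b (map snd l) -> rg C b = y) ->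
  sum_map l u v -> rg C u = y /\ rg C v = x.
Proof.
  intros Hfst Hsnd Huv. apply sum_map_iff in Huv.
  destruct Huv as ([a b] & Hab & Huv). apply pair_map_iff in Huv.
  destruct Huv as (t & Hb & Ha & -> & ->). rewrite !rg_comp by congruence. split.
  - apply Hsnd. apply (in_map snd _ _ Hab).
  - apply Hfst. apply (in_map fst _ _ Hab).
Qed.

Lemma meets_own_cones_sum_map_rg (l : list (Mor C * Mor C)) (x y : Obj C) (u v : Mor C) :
  meets_own_cones (sum_map l) ->
  (forall b, In b (map fst l) -> rg C b = x) ->
  (forall b, In b (map snd l) -> rg C b = y) ->
  sum_map l u v -> x = y.
Proof.
  intros Hcones Hfst Hsnd Huv.
  destruct (Hcones _ _ Huv) as (g & g' & Hg & Hg' & Hgg).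
  destruct (sum_map_rg l x y g g' Hfst Hsnd Hgg) as [Hy Hx].
  apply in_right_ideal_rg in Hg, Hg'. congruence.
Qed.

(** [Q] lists generators [b · p = c · q] of [bΛ ∩ cΛ]. *)
Definition aligns (b c : Mor C) (Q : list (Mor C * Mor C)) : Prop :=
  (forall p q, In (p, q) Q -> sc C b = rg C p /\ sc C c = rg C q /\ b · p = c · q) /\
  (forall v w, sc C b = rg C v -> sc C c = rg C w -> b · v = c · w ->
     exists p q z, In (p, q) Q /\ sc C p = rg C z /\ sc C q = rg C z /\
       v = p · z /\ w = q · z).

Lemma aligns_swap (b c : Mor C) (Q : list (Mor C * Mor C)) :
  aligns b c Q -> aligns c b (map swap Q).
Proof.
  intros [Hgen Hfact]. split.
  - intros q p Hqp. apply in_map_swap, Hgen in Hqp.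
    destruct Hqp as (Hp & Hq & E). auto.
  - intros w v Hw Hv E.
    destruct (Hfact v w Hv Hw (eq_sym E)) as (p & q & z & Hpq & Hp & Hq & Hv' & Hw').
    exists q, p, z. rewrite in_map_swap. auto.
Qed.

Lemma aligns_exists (b c : Mor C) : exists Q, aligns b c Q.
Proof.
  destruct (FA b c) as [fs Hfs].
  destruct (list_choice _ _ (fun f (pq : Mor C * Mor C) =>
      sc C b = rg C (fst pq) /\ sc C c = rg C (snd pq) /\
      f = b · fst pq /\ f = c · snd pq) fs) as (Q & HQ & Hfs').
  { intros f Hf.
    destruct (proj2 (Hfs f) (ex_intro _ f (conj Hf (in_right_ideal_refl f))))
      as [(p & Hp & Hfp) (q & Hq & Hfq)].
    exists (p, q). auto. }
  exists Q. split.
  - intros p q Hpq. destruct (HQ _ Hpq) as (f & _ & Hp & Hq & -> & E). auto.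
  - intros v w Hv Hw E.
    destruct (proj1 (Hfs (b · v))) as (f & Hf & z & Hz & Ez).
    { split; [exists v | exists w]; auto. }
    destruct (Hfs' _ Hf) as ([p q] & Hpq & Hp & Hq & Hfp & Hfq); simpl in *.
    assert (Hscp : sc C f = sc C p) by (rewrite Hfp; apply sc_comp, Hp).
    assert (Hscq : sc C f = sc C q) by (rewrite Hfq; apply sc_comp, Hq).
    exists p, q, z. split; [exact Hpq |]. split; [congruence |]. split; [congruence |].
    split.
    + apply (LC b); [exact Hv | rewrite rg_comp; congruence |].
      rewrite Ez, Hfp. symmetry. apply comp_assoc; congruence.
    + apply (LC c); [exact Hw | rewrite rg_comp; congruence |].
      rewrite <- E, Ez, Hfq. symmetry. apply comp_assoc; congruence.
Qed.

Definition aligned_pairs (a d : Mor C) (Q : list (Mor C * Mor C)) : list (Mor C * Mor C) :=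
  map (fun pq => (a · fst pq, d · snd pq)) Q.

Lemma pair_map_pcomp (a b c d : Mor C) (Q : list (Mor C * Mor C)) :
  sc C a = sc C b -> sc C c = sc C d -> aligns b c Q ->
  pcomp (pair_map (a, b)) (pair_map (c, d)) = sum_map (aligned_pairs a d Q).
Proof.
  intros Hab Hcd [Hgen Hfact]. apply pmap_ext. intros x y.
  rewrite sum_map_iff. split.
  - intros (m & Hxm & Hmy).
    apply pair_map_iff in Hxm, Hmy.
    destruct Hxm as (t1 & Hd1 & Hc1 & -> & ->), Hmy as (t2 & Hb2 & Ha2 & E & ->).
    destruct (Hfact t2 t1) as (p & q & z & Hpq & Hp & Hq & -> & ->); try congruence.
    destruct (Hgen _ _ Hpq) as (Hbp & Hcq & _).
    exists (a · p, d · q). split; [apply in_map_iff; exists (p, q); auto |].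
    apply pair_map_iff. exists z.
    rewrite !sc_comp by congruence.
    split; [congruence |]. split; [congruence |].
    split; apply comp_assoc; congruence.
  - intros (t & Ht & Hxy). apply in_map_iff in Ht.
    destruct Ht as ([p q] & <- & Hpq). simpl in Hxy.
    destruct (Hgen _ _ Hpq) as (Hbp & Hcq & E).
    apply pair_map_iff in Hxy. destruct Hxy as (w & Hw1 & Hw2 & -> & ->).
    rewrite sc_comp in Hw1, Hw2 by congruence.
    exists (c · (q · w)). split; apply pair_map_iff.
    + exists (q · w). rewrite rg_comp by congruence.
      split; [congruence |]. split; [congruence |].
      split; [symmetry; apply comp_assoc; congruence | reflexivity].
    + exists (p · w). rewrite rg_comp by congruence.
      split; [congruence |]. split; [congruence |].
      rewrite !comp_assoc by congruence. rewrite E. auto.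
Qed.

Definition product_cover (lf lg L : list (Mor C * Mor C)) : Prop :=
  (forall t, In t L -> exists a b c d, In (a, b) lf /\ In (c, d) lg /\
     in_right_ideal C a (fst t) /\ in_right_ideal C d (snd t)) /\
  (forall a b c d, In (a, b) lf -> In (c, d) lg -> sc C a = sc C b -> sc C c = sc C d ->
     exists Q, aligns b c Q /\ forall p q, In (p, q) Q -> In (a · p, d · q) L).

Lemma product_cover_swap (lf lg L : list (Mor C * Mor C)) :
  product_cover lf lg L -> product_cover (map swap lg) (map swap lf) (map swap L).
Proof.
  intros [Hshape Hcover]. split.
  - intros [u v] Huv. apply in_map_swap, Hshape in Huv.
    destruct Huv as (a & b & c & d & Hab & Hcd & Ha & Hd).
    exists d, c, b, a. rewrite !in_map_swap. auto.
  - intros d c b a Hdc Hba Hd Hb. rewrite in_map_swap in Hdc, Hba.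
    destruct (Hcover a b c d Hba Hdc (eq_sym Hb) (eq_sym Hd)) as (Q & HQ & HL).
    exists (map swap Q). split; [apply aligns_swap, HQ |].
    intros q p Hqp. apply in_map_swap, HL in Hqp. apply in_map_swap, Hqp.
Qed.

Lemma sum_map_concat (ls : list (list (Mor C * Mor C))) (x y : Mor C) :
  sum_map (concat ls) x y <-> exists l, In l ls /\ sum_map l x y.
Proof.
  rewrite sum_map_iff. split.
  - intros (p & Hp & Hxy). apply in_concat in Hp. destruct Hp as (l & Hl & Hp).
    exists l. rewrite sum_map_iff. eauto.
  - intros (l & Hl & Hxy). apply sum_map_iff in Hxy. destruct Hxy as (p & Hp & Hxy).
    exists p. rewrite in_concat. eauto.
Qed.

Lemma pcomp_sum_map_iff (lf lg : list (Mor C * Mor C)) (x y : Mor C) :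
  pcomp (sum_map lf) (sum_map lg) x y <->
  exists ab cd, In ab lf /\ In cd lg /\ pcomp (pair_map ab) (pair_map cd) x y.
Proof.
  split.
  - intros (m & Hxm & Hmy). apply sum_map_iff in Hxm, Hmy.
    destruct Hxm as (cd & Hcd & Hxm), Hmy as (ab & Hab & Hmy).
    exists ab, cd. split; [| split]; [| | exists m]; auto.
  - intros (ab & cd & Hab & Hcd & m & Hxm & Hmy).
    exists m. split; apply sum_map_iff; eauto.
Qed.

Definition pair_product (ab cd : Mor C * Mor C) (L0 : list (Mor C * Mor C)) : Prop :=
  sum_map L0 = pcomp (pair_map ab) (pair_map cd) /\
  (forall t, In t L0 -> in_right_ideal C (fst ab) (fst t) /\ in_right_ideal C (snd cd) (snd t)) /\
  (sc C (fst ab) = sc C (snd ab) -> sc C (fst cd) = sc C (snd cd) ->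
     exists Q, aligns (snd ab) (fst cd) Q /\
       forall p q, In (p, q) Q -> In (fst ab · p, snd cd · q) L0).

Lemma pair_product_exists (ab cd : Mor C * Mor C) : exists L0, pair_product ab cd L0.
Proof.
  destruct ab as [a b], cd as [c d]. unfold pair_product; simpl.
  destruct (classic (sc C a = sc C b /\ sc C c = sc C d)) as [[Hab Hcd] | Hunbal].
  - destruct (aligns_exists b c) as [Q HQ].
    exists (aligned_pairs a d Q). split; [| split].
    + symmetry. apply pair_map_pcomp; assumption.
    + intros t Ht. apply in_map_iff in Ht. destruct Ht as ([p q] & <- & Hpq).
      destruct (proj1 HQ _ _ Hpq) as (Hp & Hq & _). simpl.
      split; [exists p | exists q]; split; congruence.
    + intros _ _. exists Q. split; [exact HQ |].
      intros p q Hpq. apply (in_map (fun pq => (a · fst pq, d · snd pq)) _ _ Hpq).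
  - exists []. split; [| split].
    + apply pmap_ext. intros x y. split; [intros (p & [] & _) |].
      intros (m & Hxm & Hmy). apply pair_map_iff in Hxm, Hmy.
      destruct Hxm as (t1 & Hd & Hc & _), Hmy as (t2 & Hb & Ha & _).
      exfalso. apply Hunbal. split; congruence.
    + intros t [].
    + intros Hab Hcd. exfalso. auto.
Qed.

Lemma sum_map_pcomp (lf lg : list (Mor C * Mor C)) :
  exists L, sum_map L = pcomp (sum_map lf) (sum_map lg) /\ product_cover lf lg L.
Proof.
  destruct (list_choice _ _ (fun abcd L0 => pair_product (fst abcd) (snd abcd) L0)
              (list_prod lf lg)) as (ls & Hls & Hpairs).
  { intros abcd _. apply pair_product_exists. }
  exists (concat ls). split; [| split].
  - apply pmap_ext. intros x y. rewrite sum_map_concat, pcomp_sum_map_iff. split.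
    + intros (L0 & HL0 & Hxy). destruct (Hls _ HL0) as ([ab cd] & Habcd & HL0e & _).
      apply in_prod_iff in Habcd. destruct Habcd as [Hab Hcd].
      simpl in HL0e. rewrite HL0e in Hxy. exists ab, cd. auto.
    + intros (ab & cd & Hab & Hcd & Hxy).
      destruct (Hpairs (ab, cd)) as (L0 & HL0 & HL0e & _); [apply in_prod; auto |].
      simpl in HL0e. rewrite <- HL0e in Hxy. eauto.
  - intros t Ht. apply in_concat in Ht. destruct Ht as (L0 & HL0 & Ht).
    destruct (Hls _ HL0) as ([[a b] [c d]] & Habcd & _ & Hshape & _).
    apply in_prod_iff in Habcd. destruct (Hshape _ Ht).
    exists a, b, c, d. tauto.
  - intros a b c d Hab Hcd Ha Hc.
    destruct (Hpairs ((a, b), (c, d))) as (L0 & HL0 & _ & _ & Hcover); [apply in_prod; auto |].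
    destruct (Hcover Ha Hc) as (Q & HQ & HL). exists Q. split; [exact HQ |].
    intros p q Hpq. apply in_concat. eauto.
Qed.

Lemma product_cover_rg_fst (lf lg L : list (Mor C * Mor C)) (x : Obj C) :
  product_cover lf lg L -> (forall b, In b (map fst lf) -> rg C b = x) ->
  forall b, In b (map fst L) -> rg C b = x.
Proof.
  intros [Hshape _] Hlf b Hb. apply in_map_iff in Hb. destruct Hb as (t & <- & Ht).
  destruct (Hshape _ Ht) as (a & b & c & d & Hab & _ & Ha & _).
  rewrite (in_right_ideal_rg _ _ Ha). apply Hlf, (in_map fst _ _ Hab).
Qed.

Lemma product_cover_rg_snd (lf lg L : list (Mor C * Mor C)) (z : Obj C) :
  product_cover lf lg L -> (forall b, In b (map snd lg) -> rg C b = z) ->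
  forall b, In b (map snd L) -> rg C b = z.
Proof.
  intros HL Hlg. rewrite <- map_fst_swap.
  apply (product_cover_rg_fst _ _ _ z (product_cover_swap _ _ _ HL)).
  rewrite map_fst_swap. exact Hlg.
Qed.

(** Given [a0 · c0 = α · d0], push [β · d0] into some [γΛ]; the alignment of
    [β] and [γ] then yields a pair of [L] whose first entry meets [a0]. *)
Lemma product_cover_exhaustive_fst (lf lg L : list (Mor C * Mor C)) (x y : Obj C) :
  balanced lf -> balanced lg -> product_cover lf lg L ->
  exhaustive_at x (map fst lf) -> (forall b, In b (map snd lf) -> rg C b = y) ->
  exhaustive_at y (map fst lg) -> exhaustive_at x (map fst L).
Proof.
  intros Bf Bg HL [Hrf Hexf] Hrb [_ Hexg].
  split; [exact (product_cover_rg_fst _ _ _ x HL Hrf) |].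
  intros a0 Ha0.
  destruct (Hexf a0 Ha0) as (al & Hal & g0 & Hg0 & d0 & Hd0 & ->).
  apply in_map_iff in Hal. destruct Hal as ([al' be] & Eal & Hab). simpl in Eal. subst al'.
  pose proof (Bf _ _ Hab) as Sab.
  assert (Hbd : rg C (be · d0) = y).
  { rewrite rg_comp by congruence. apply Hrb, (in_map snd _ _ Hab). }
  destruct (Hexg _ Hbd) as (ga & Hga & g1 & (c1 & Hc1 & ->) & d1 & Hd1 & E1).
  apply in_map_iff in Hga. destruct Hga as ([ga' de] & Ega & Hgd). simpl in Ega. subst ga'.
  rewrite sc_comp in Hc1 by congruence.
  destruct (proj2 HL al be ga de Hab Hgd Sab (Bg _ _ Hgd)) as (Q & [Hgen Hfact] & HQ).
  destruct (Hfact (d0 · c1) d1) as (p & q & z & Hpq & Hp & _ & Hv & _);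
    [rewrite rg_comp; congruence | exact Hd1 | |].
  { rewrite comp_assoc by congruence. exact E1. }
  destruct (Hgen _ _ Hpq) as (Hbp & _ & _).
  exists (al · p). split; [apply (in_map fst _ _ (HQ _ _ Hpq)) |].
  exists (al · d0 · c1). split.
  - apply in_right_ideal_comp; [exact Hg0 | rewrite sc_comp; congruence].
  - rewrite <- comp_assoc, Hv, comp_assoc by congruence.
    exists z. rewrite sc_comp by congruence. auto.
Qed.

Lemma product_cover_exhaustive_snd (lf lg L : list (Mor C * Mor C)) (y z : Obj C) :
  balanced lf -> balanced lg -> product_cover lf lg L ->
  exhaustive_at z (map snd lg) -> (forall b, In b (map fst lg) -> rg C b = y) ->
  exhaustive_at y (map snd lf) -> exhaustive_at z (map snd L).
Proof.
  intros Bf Bg HL Hg Hrg Hf. rewrite <- map_fst_swap.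
  apply (product_cover_exhaustive_fst _ _ _ z y (balanced_swap _ Bg) (balanced_swap _ Bf)
           (product_cover_swap _ _ _ HL));
    rewrite ?map_fst_swap, ?map_snd_swap; assumption.
Qed.

Lemma sum_map_cons_unbalanced (a b : Mor C) (l : list (Mor C * Mor C)) :
  sc C a <> sc C b -> sum_map ((a, b) :: l) = sum_map l.
Proof.
  intros Hab. apply pmap_ext. intros x y. rewrite !sum_map_iff. split.
  - intros (p & [<- | Hp] & Hxy); [exfalso; exact (pair_map_unbalanced a b x y Hab Hxy) |].
    eauto.
  - intros (p & Hp & Hxy). exists p. simpl. auto.
Qed.

Lemma exhaustive_at_idm (x : Obj C) (B : list (Mor C)) :
  In (idm C x) B -> (forall b, In b B -> rg C b = x) -> exhaustive_at x B.
Proof.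
  intros Hid HB. split; [exact HB |]. intros a <-.
  exists (idm C (rg C a)). split; [exact Hid |].
  exists a. split; [apply in_right_ideal_refl | apply in_right_ideal_idm].
Qed.

Lemma balanced_of_endomorphisms (l : list (Mor C * Mor C)) (x : Obj C) :
  (forall c, rg C c = x -> sc C c = x) ->
  (forall b, In b (map fst l) -> rg C b = x) -> (forall b, In b (map snd l) -> rg C b = x) ->
  balanced l.
Proof.
  intros Hendo Hfst Hsnd a b Hab. rewrite !Hendo; [reflexivity | |].
  - apply Hsnd, (in_map snd _ _ Hab).
  - apply Hfst, (in_map fst _ _ Hab).
Qed.

Lemma F_Lambda_pcomp_sum_map (lf lg : list (Mor C * Mor C)) (x : Obj C) :
  S_Iso (pcomp (sum_map lf) (sum_map lg)) -> pcomp (sum_map lf) (sum_map lg) <> pzero C ->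
  exhaustive_at x (map fst lf) -> exhaustive_at x (map snd lf) ->
  exhaustive_at x (map fst lg) -> exhaustive_at x (map snd lg) ->
  F_Lambda (pcomp (sum_map lf) (sum_map lg)).
Proof.
  intros Hiso Hnz Ea Eb Ec Ed.
  destruct (sum_map_pcomp lf lg) as (L & HL & Hcov).
  rewrite <- HL in *. apply F_Lambda_iff. right.
  destruct (classic (exists c, rg C c = x /\ sc C c <> x)) as [(c & Hc & Hsc) | Hnot].
  - (* The pairs [(idm x, c)] and [(c, idm x)] are zero maps, but put [idm x]
       into both lists. *)
    pose proof (product_cover_rg_fst _ _ _ x Hcov (proj1 Ea)) as Rfst.
    pose proof (product_cover_rg_snd _ _ _ x Hcov (proj1 Ed)) as Rsnd.
    exists ((idm C x, c) :: (c, idm C x) :: L). split; [discriminate |].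
    split; [rewrite !sum_map_cons_unbalanced; rewrite ?sc_idm; auto |].
    split; [exact Hiso |].
    split; exists x; apply exhaustive_at_idm; simpl; auto;
      intros b [<- | [<- | Hb]]; auto using rg_idm.
  - assert (Hendo : forall c, rg C c = x -> sc C c = x).
    { intros c Hc. apply NNPP. intros Hsc. apply Hnot. eauto. }
    assert (HL_nil : L <> []).
    { intros ->. apply Hnz, pmap_ext. intros u v. split; [intros (p & [] & _) | intros []]. }
    exists L. split; [exact HL_nil |].
    split; [reflexivity |]. split; [exact Hiso |].
    pose proof (balanced_of_endomorphisms lf x Hendo (proj1 Ea) (proj1 Eb)) as Bf.
    pose proof (balanced_of_endomorphisms lg x Hendo (proj1 Ec) (proj1 Ed)) as Bg.
    split; exists x.
    + exact (product_cover_exhaustive_fst _ _ _ x x Bf Bg Hcov Ea (proj1 Eb) Ec).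
    + exact (product_cover_exhaustive_snd _ _ _ x x Bf Bg Hcov Ed (proj1 Ec) Eb).
Qed.

Lemma F_Lambda_S_Iso (f : pmap C) : F_Lambda f -> S_Iso f.
Proof.
  intros [-> | (l & _ & _ & Hf & _)]; [| exact Hf].
  apply meets_own_cones_S_Iso; [apply S_zero | intros e v []].
Qed.

Lemma F_Lambda_pinv (f : pmap C) : F_Lambda f -> F_Lambda (pinv f).
Proof.
  rewrite !F_Lambda_iff. intros [-> | (l & Hl & -> & Hf & Ea & Eb)].
  - left. apply pmap_ext. intros x y. split; intros [].
  - right. exists (map swap l). split; [intros H; apply map_eq_nil in H; contradiction |].
    split; [apply sum_map_swap |]. split; [apply S_Iso_pinv, Hf |].
    rewrite map_fst_swap, map_snd_swap. auto.
Qed.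

Lemma F_Lambda_pcomp (f g : pmap C) : F_Lambda f -> F_Lambda g -> F_Lambda (pcomp f g).
Proof.
  intros Hf Hg. destruct (classic (pcomp f g = pzero C)) as [Hz | Hnz].
  { rewrite Hz. left. reflexivity. }
  destruct (pmap_nonzero Hnz) as (u & w & m & Hum & Hmw).
  pose proof (F_Lambda_S_Iso f Hf) as Sf. pose proof (F_Lambda_S_Iso g Hg) as Sg.
  apply F_Lambda_iff in Hf, Hg.
  destruct Hf as [-> | (lf & _ & -> & _ & (x & Ea) & (y & Eb))]; [destruct Hmw |].
  destruct Hg as [-> | (lg & _ & -> & _ & (y' & Ec) & (z & Ed))]; [destruct Hum |].
  assert (x = y) as <- by exact (meets_own_cones_sum_map_rg lf x y m w
    (S_Iso_meets_own_cones _ Sf) (proj1 Ea) (proj1 Eb) Hmw).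
  assert (y' = z) as <- by exact (meets_own_cones_sum_map_rg lg y' z u m
    (S_Iso_meets_own_cones _ Sg) (proj1 Ec) (proj1 Ed) Hum).
  assert (x = y') as <-.
  { destruct (sum_map_rg lf x x m w (proj1 Ea) (proj1 Eb) Hmw) as [Hm _].
    destruct (sum_map_rg lg y' y' u m (proj1 Ec) (proj1 Ed) Hum) as [_ Hm'].
    congruence. }
  apply (F_Lambda_pcomp_sum_map lf lg x); auto using S_Iso_pcomp.
Qed.

End FLambda.

Theorem lemma4p8 (C : SmallCat) :
  left_cancellative C -> finitely_aligned C ->
  (forall f : pmap C, F_Lambda f -> S_Iso f) /\
  (forall f g : pmap C, F_Lambda f -> F_Lambda g -> F_Lambda (pcomp f g)) /\
  (forall f : pmap C, F_Lambda f -> F_Lambda (pinv f)).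
Proof.
  intros LC FA. split; [| split].
  - exact (F_Lambda_S_Iso C LC).
  - exact (F_Lambda_pcomp C LC FA).
  - exact (F_Lambda_pinv C LC).
Qed.
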